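(* Let $N \ge 1$ and let $W_N$ be the set of binary words of length $N$. Define $\varphi_3 : W_N \to W_N$ by $\varphi_3(u) = v\, 0 11\, 0^{p-1} v'$ if $u = v 0^p 11 v'$ where $p \geq 2$, $v'$ is a (possibly empty) word, and $v$ is a (possibly empty) word which does not contain $0011$ as a contiguous subword and which is either empty or ends with the letter $1$; and $\varphi_3(u) = u$ otherwise. Then $|P(\varphi_3(u))| \leq |P(u)|$ for every $u \in W_N$.
   Context: For a binary word $x$, $x^j$ denotes $j$ concatenated copies of $x$, and juxtaposition denotes concatenation. For a binary word $w = w_1 \cdots w_\ell$ of length $\ell$, $P(w)$ is the set of indices $i \geq 2$ such that at least one of the following holds: (i) $\ell \geq i$ and $w_{i-1} w_i = 00$; (ii) $\ell \geq i+2$ and $w_{i-1} w_i w_{i+1} w_{i+2} = 0100$; (iii) $\ell \geq i+3$ and $w_{i-1} \cdots w_{i+3} = 01010$. *)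

(* Binary words are [seq bool] with false = 0, true = 1. *)
From mathcomp Require Import all_boot.
Set Implicit Arguments. Unset Strict Implicit. Unset Printing Implicit Defensive.

(* 1-based letter access: letter w i = w_i (for 1 <= i <= size w). *)
Definition letter (w : seq bool) (i : nat) : bool := nth false w i.-1.

Definition Pcond (w : seq bool) (i : nat) : bool :=
  let l := size w in
  [|| (i <= l) && (~~ letter w i.-1) && (~~ letter w i)
    , (i + 2 <= l) && [&& ~~ letter w i.-1, letter w i,
                          ~~ letter w i.+1 & ~~ letter w i.+2]
    | (i + 3 <= l) && [&& ~~ letter w i.-1, letter w i, ~~ letter w i.+1,
                          letter w i.+2 & ~~ letter w i.+3] ].

(* P(w) as the list of its elements; every element i satisfies 2 <= i <= size w,
   so we enumerate the candidates 2, ..., size w. *)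
Definition P (w : seq bool) : seq nat := [seq i <- iota 2 (size w).-1 | Pcond w i].

Definition zero := false.
Definition one := true.

Definition phi3_decomp (u v : seq bool) (p : nat) (v' : seq bool) : Prop :=
  [/\ u = v ++ nseq p zero ++ [:: one; one] ++ v',
      2 <= p,
      ~~ infix [:: zero; zero; one; one] v
    & v = [::] \/ last zero v = one].

Definition phi3_graph (u w : seq bool) : Prop :=
  (exists v p v', phi3_decomp u v p v' /\
                  w = v ++ [:: zero; one; one] ++ nseq p.-1 zero ++ v')
  \/ ((forall v p v', ~ phi3_decomp u v p v') /\ w = u).

From mathcomp Require Import all_boot zify.

(* |P(w)| counts the positions at which w begins a factor 00, 0100 or 01010.
   Write u = v 0^p 11 v', so that phi3(u) = v 011 0^(p-1) v'.  A factor found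
   at a position of v when 011 follows v is also found when 0011 follows,
   because v is empty or ends with 1 (a finite case check).  In u, the first
   p-1 zeros of 0^p each begin 00 and no position of 0^p 11 contributes
   anything else, whereas in phi3(u) the block 011 contributes nothing and
   0^(p-1) v' contributes at most p-1 more than v'. *)

Definition Pstart (s : seq bool) : bool :=
  match s with
  | [:: false, false & _] => true
  | [:: false, true, false, false & _] => true
  | [:: false, true, false, true, false & _] => true
  | _ => false
  end.

Fixpoint Pcount (s : seq bool) : nat :=
  if s is _ :: r then Pstart s + Pcount r else 0.

Fixpoint Pcount_in (v m : seq bool) : nat :=
  if v is _ :: r then Pstart (v ++ m) + Pcount_in r m else 0.

Lemma Pcount_cat v m : Pcount (v ++ m) = Pcount_in v m + Pcount m.
Proof. by elim: v => //= x v ->; rewrite addnA. Qed.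

Lemma Pcount_countE w :
  Pcount w = count (fun j => Pstart (drop j w)) (iota 0 (size w)).
Proof.
elim: w => //= x w ->; congr (_ + _).
by rewrite -(addn0 1) iotaDl count_map.
Qed.

Lemma Pcond_drop w j : Pcond w j.+2 = Pstart (drop j w).
Proof.
have PstartE d : Pstart d =
  [|| (2 <= size d) && (~~ nth false d 0) && (~~ nth false d 1)
    , (4 <= size d) && [&& ~~ nth false d 0, nth false d 1,
                          ~~ nth false d 2 & ~~ nth false d 3]
    | (5 <= size d) && [&& ~~ nth false d 0, nth false d 1, ~~ nth false d 2,
                          nth false d 3 & ~~ nth false d 4] ].
  by case: d => [|[] [|[] [|[] [|[] [|[] d]]]]].
rewrite /Pcond PstartE /letter size_drop !nth_drop !(addnC j) /=.
have -> : (1 < size w - j) = (j.+2 <= size w) by lia.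
have -> : (3 < size w - j) = (j.+2 + 2 <= size w) by lia.
by have -> : (4 < size w - j) = (j.+2 + 3 <= size w) by lia.
Qed.

Lemma Pstart_short s : size s <= 1 -> Pstart s = false.
Proof. by case: s => [|[] [|? ?]]. Qed.

Lemma size_P w : size (P w) = Pcount w.
Proof.
rewrite /P size_filter Pcount_countE -(addn0 2) iotaDl count_map.
case Hw: (size w) => [|n] //.
rewrite -[in RHS]addn1 iotaD count_cat /= addn0 add0n.
rewrite Pstart_short ?size_drop ?Hw ?subSnn // addn0.
by apply: eq_count => j; exact: Pcond_drop.
Qed.

Lemma Pstart_cat_011_le s t t' : s != [::] -> last false s ->
  Pstart (s ++ [:: false, true, true & t]) <= Pstart (s ++ [:: false, false & t']).
Proof. by case: s => [|[] [|[] [|[] [|[] [|[] r]]]]]. Qed.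

Lemma Pcount_in_011_le v t t' : v = [::] \/ last false v ->
  Pcount_in v [:: false, true, true & t] <= Pcount_in v [:: false, false & t'].
Proof.
elim: v => [|x s IH] // Hv.
apply: leq_add; first by apply: Pstart_cat_011_le; case: Hv.
by apply: IH; case: s Hv => [|y s]; [left | case=> //= ->; right].
Qed.

Lemma Pcount_011 t : Pcount [:: false, true, true & t] = Pcount t.
Proof. by []. Qed.

Lemma Pcount_zeros_11 q t :
  Pcount (nseq q.+1 false ++ [:: true, true & t]) = q + Pcount t.
Proof. by elim: q => [|q /= ->]. Qed.

Lemma Pcount_zeros_le n t : Pcount (nseq n false ++ t) <= n + Pcount t.
Proof.
elim: n => //= n IH; rewrite -add1n -addnA leq_add //.
by case: (_ ++ _) => [|[] [|[] [|[] [|[] ?]]]].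
Qed.

Theorem lemma4p3 (N : nat) (u w : seq bool) :
  1 <= N -> size u = N -> phi3_graph u w -> size (P w) <= size (P u).
Proof.
move=> _ _ [[v [p [v' [[-> Hp _ Hv] ->]]]] | [_ ->]] //.
case: p Hp => [|[|q]] // _.
rewrite !size_P !(Pcount_cat v); apply: leq_add; first exact: Pcount_in_011_le.
by rewrite Pcount_011 Pcount_zeros_11 Pcount_zeros_le.
Qed.
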